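(* Let $K$ be a finite connected bipartite simple graph. Then the number of isomorphism classes of simple graphs $G$ with $KC(G)\cong K$ equals $|\Pi_K/{\cong}|$, the number of conjugacy classes of polarities of $K$ under $\operatorname{Aut}K$. In particular, $K$ is the Kronecker cover of exactly $k$ pairwise non-isomorphic simple graphs if and only if $k=|\Pi_K/{\cong}|$.
   Context: For a simple graph $G$, the Kronecker cover $KC(G)$ is the graph with vertex set $V(G)\times\{0,1\}$ in which $(u,a)$ is adjacent to $(v,b)$ if and only if $uv\in E(G)$ and $a\neq b$. Equivalently, it is the tensor product $G\times K_2$. Let $K$ be a connected bipartite graph with bipartition $(V_1,V_2)$. A polarity of $K$ is an automorphism $\pi\in\operatorname{Aut}K$ such that: - $\pi$ is a fixed-point-free involution; - $\pi(V_1)=V_2$; - for every vertex $v$, the vertices $v$ and $\pi(v)$ are non-adjacent. Let $\Pi_K\subseteq\operatorname{Aut}K$ be the set of all polarities of $K$. Define two polarities $\pi,\pi'$ to be equivalent, written $\pi\cong\pi'$, if $\pi'=\alpha\pi\alpha^{-1}$ for some $\alpha\in\operatorname{Aut}K$; this is an equivalence relation on $\Pi_K$. Then $\Pi_K/{\cong}$ denotes the set of equivalence classes. *)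

From mathcomp Require Import all_boot fingroup perm.
Set Implicit Arguments. Unset Strict Implicit. Unset Printing Implicit Defensive.

Definition simple_graph (T : finType) (e : rel T) : bool :=
  [forall x, ~~ e x x] && [forall x, forall y, e x y == e y x].

Definition connected_graph (T : finType) (e : rel T) : Prop :=
  forall x y, connect e x y.

Definition is_bipartition (T : finType) (e : rel T) (V1 : {set T}) : bool :=
  [forall x, forall y, e x y ==> ((x \in V1) != (y \in V1))].

Definition kron_cover (T : finType) (e : rel T) : rel (T * bool) :=
  fun u v => e u.1 v.1 && (u.2 != v.2).

Definition graph_iso (T1 T2 : finType) (e1 : rel T1) (e2 : rel T2) : bool :=
  (#|T1| == #|T2|) &&
  [exists f : {ffun T1 -> T2},
     injectiveb f && [forall x, forall y, e2 (f x) (f y) == e1 x y]].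

Definition grel (m : nat) (E : {ffun 'I_m * 'I_m -> bool}) : rel 'I_m :=
  fun x y => E (x, y).

Definition kc_preimages (T : finType) (eK : rel T) (m : nat)
  : {set {ffun 'I_m * 'I_m -> bool}} :=
  [set E | simple_graph (grel E) && graph_iso (kron_cover (grel E)) eK].

Definition n_kc_classes_m (T : finType) (eK : rel T) (m : nat) : nat :=
  #|[set [set E' : {ffun 'I_m * 'I_m -> bool} | graph_iso (grel E) (grel E')] | E in kc_preimages eK m]|.

(* Every finite graph is isomorphic to one on some 'I_m, and KC(G) ~ K forces
   2 |V(G)| = |V(K)|, so m ranges over 0..#|T| w.l.o.g.; graphs on different
   'I_m are never isomorphic, so the classes are counted per m and summed. *)
Definition n_kc_classes (T : finType) (eK : rel T) : nat :=
  \sum_(m < #|T|.+1) n_kc_classes_m eK m.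

Definition autK (T : finType) (eK : rel T) : {set {perm T}} :=
  [set s : {perm T} | [forall x, forall y, eK (s x) (s y) == eK x y]].

Definition polarity (T : finType) (eK : rel T) (V1 : {set T}) (p : {perm T})
  : bool :=
  [&& p \in autK eK,
      (p * p == 1)%g,
      [forall x, p x != x],
      [forall x, (p x \in V1) == (x \notin V1)] &
      [forall x, ~~ eK x (p x)]].

Definition polarities (T : finType) (eK : rel T) (V1 : {set T})
  : {set {perm T}} := [set p | polarity eK V1 p].

Definition polarity_class (T : finType) (eK : rel T) (p : {perm T})
  : {set {perm T}} :=
  [set (a * p * a^-1)%g | a in autK eK].

Definition n_polarity_classes (T : finType) (eK : rel T) (V1 : {set T}) : nat :=
  #|[set polarity_class eK p | p in polarities eK V1]|.

From Pilot Require Import Defs.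
From mathcomp Require Import all_boot fingroup perm.
From mathcomp Require Import zify.

(* An isomorphism phi : KC(G) ~ K carries the sheet swap (v, b) |-> (v, ~~ b) of the cover
   to a polarity of K, and connectedness of K forces it to exchange the two sides of the
   bipartition.  Conversely a polarity p is induced by the quotient graph K/p on V1, in which
   x ~ y iff x is adjacent to p y.  Isomorphisms between base graphs correspond to
   automorphisms of K conjugating the induced polarities, so isomorphism classes of graphs G
   with KC(G) ~ K are in bijection with conjugacy classes of polarities. *)

Set Implicit Arguments. Unset Strict Implicit. Unset Printing Implicit Defensive.

Local Open Scope group_scope.

Lemma card_imset_related (A B C D : finType) (d : D) (P : {set A}) (Q : {set B})
    (cA : A -> C) (cB : B -> D) (R : A -> B -> bool) :
  (forall a, a \in P -> exists2 b, b \in Q & R a b) ->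
  (forall b, b \in Q -> exists2 a, a \in P & R a b) ->
  (forall a a' b b', a \in P -> a' \in P -> b \in Q -> b' \in Q ->
     R a b -> R a' b' -> (cA a == cA a') = (cB b == cB b')) ->
  #|cA @: P| = #|cB @: Q|.
Proof.
move=> PtoQ QtoP compat.
pose k (x : C) : D :=
  if [pick ab : A * B | [&& ab.1 \in P, ab.2 \in Q, R ab.1 ab.2 & cA ab.1 == x]]
  is Some ab then cB ab.2 else d.
have kE a b : a \in P -> b \in Q -> R a b -> k (cA a) = cB b.
  move=> aP bQ Rab; rewrite /k; case: pickP => [[a' b'] /and4P [/= a'P b'Q Rab' /eqP e]|].
    by apply/eqP; rewrite -(compat a' a) // e.
  by move/(_ (a, b)); rewrite /= aP bQ Rab eqxx.
have -> : cB @: Q = k @: (cA @: P).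
  apply/setP => y; apply/imsetP/imsetP => [[b bQ ->]|[_ /imsetP [a aP ->] ->]].
    have [a aP Rab] := QtoP b bQ; exists (cA a); first exact: imset_f.
    by rewrite (kE a b).
  by have [b bQ Rab] := PtoQ a aP; exists b => //; apply: kE.
rewrite [RHS]card_in_imset // => _ _ /imsetP [a1 a1P ->] /imsetP [a2 a2P ->].
have [b1 b1Q R1] := PtoQ a1 a1P; have [b2 b2Q R2] := PtoQ a2 a2P.
by rewrite (kE a1 b1) // (kE a2 b2) // => /eqP; rewrite -(compat a1 a2 b1 b2) // => /eqP.
Qed.

Lemma eq_set_rel (X : finType) (r : rel X) :
  reflexive r -> left_transitive r ->
  forall x y, ([set z | r x z] == [set z | r y z]) = r x y.
Proof.
move=> r_refl r_ltr x y; apply/eqP/idP => [rx_ry|rxy].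
  have : y \in [set z | r y z] by rewrite inE.
  by rewrite -rx_ry inE.
by apply/setP => z; rewrite !inE (r_ltr x y rxy).
Qed.

Lemma connected_bipartition_xor (T : finType) (e : rel T) (a b : pred T) :
  connected_graph e ->
  (forall x y, e x y -> a x != a y) -> (forall x y, e x y -> b x != b y) ->
  forall x y, a x (+) b x = a y (+) b y.
Proof.
move=> conn ea eb x y.
have closed_xor : closed e [pred z | a z (+) b z].
  move=> u v euv; rewrite !inE.
  by move: (ea u v euv) (eb u v euv); case: (a u) (a v) (b u) (b v) => [] [] [] [].
by have := closed_connect closed_xor (conn x y); rewrite !inE.
Qed.

Lemma graph_isoP (T1 T2 : finType) (e1 : rel T1) (e2 : rel T2) :
  reflect (exists2 f : T1 -> T2, bijective f & forall x y, e2 (f x) (f y) = e1 x y)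
          (graph_iso e1 e2).
Proof.
apply: (iffP andP) => [[/eqP cardT /existsP [f /andP [/injectiveP f_inj /forallP fE]]]|].
  exists f; first exact: inj_card_bij f_inj (eq_leq (esym cardT)).
  by move=> x y; apply/eqP/(forallP (fE x)).
move=> [f f_bij fE]; split; first by rewrite (bij_eq_card f_bij).
apply/existsP; exists (finfun f); apply/andP; split.
  by apply/injectiveP => x y; rewrite !ffunE; apply: bij_inj.
by apply/forallP => x; apply/forallP => y; rewrite !ffunE fE.
Qed.

Lemma graph_iso_refl (T : finType) (e : rel T) : graph_iso e e.
Proof. by apply/graph_isoP; exists id => //; exists id. Qed.

Lemma graph_iso_sym (T1 T2 : finType) (e1 : rel T1) (e2 : rel T2) :
  graph_iso e1 e2 -> graph_iso e2 e1.
Proof.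
case/graph_isoP => f [g fK gK] fE; apply/graph_isoP; exists g; first by exists f.
by move=> x y; rewrite -fE !gK.
Qed.

Lemma graph_iso_trans (T1 T2 T3 : finType) (e1 : rel T1) (e2 : rel T2) (e3 : rel T3) :
  graph_iso e1 e2 -> graph_iso e2 e3 -> graph_iso e1 e3.
Proof.
case/graph_isoP => f f_bij fE /graph_isoP [g g_bij gE].
by apply/graph_isoP; exists (g \o f); [apply: bij_comp | move=> x y /=; rewrite gE fE].
Qed.

Section Automorphisms.

Variables (T : finType) (eK : rel T).

Lemma autKP (s : {perm T}) :
  reflect (forall x y, eK (s x) (s y) = eK x y) (s \in autK eK).
Proof.
rewrite inE; apply: (iffP forallP) => [sE x y|sE x]; last by apply/forallP => y; rewrite sE.
exact/eqP/(forallP (sE x)).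
Qed.

Lemma group_set_autK : group_set (autK eK).
Proof.
apply/group_setP; split; first by apply/autKP => x y; rewrite !perm1.
move=> s t /autKP sE /autKP tE; apply/autKP => x y.
by rewrite !permM tE sE.
Qed.

Canonical autK_group := group group_set_autK.

Lemma polarity_classE (p : {perm T}) : polarity_class eK p = p ^: autK eK.
Proof.
apply/setP => q; rewrite /polarity_class; apply/imsetP/imsetP => [[a aK ->]|[a aK ->]].
  by exists a^-1; [exact: groupVr | rewrite conjgE invgK mulgA].
by exists a^-1; [exact: groupVr | rewrite conjgE invgK mulgA].
Qed.

Lemma conjg_permP (p q a : {perm T}) :
  reflect (forall x, a (p x) = q (a x)) (q == p ^ a).
Proof.
apply: (iffP eqP) => [-> x|paq]; first by rewrite conjgE !permM permK.
by apply/permP => x; rewrite conjgE !permM paq permKV.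
Qed.

Variable V1 : {set T}.

Lemma polarityP (p : {perm T}) :
  reflect [/\ p \in autK eK, involutive p, forall x, p x != x,
              forall x, (p x \in V1) = (x \notin V1) & forall x, ~~ eK x (p x)]
          (p \in polarities eK V1).
Proof.
rewrite [_ \in polarities _ _]inE /polarity.
apply: (iffP and5P) => [[pK /eqP pp /forallP p_fix /forallP pV /forallP p_nadj]|].
  split=> // [x|x]; last exact/eqP.
  by rewrite -permM pp perm1.
move=> [pK p_inv p_fix pV p_nadj]; split=> //; last 2 first.
- by apply/forallP => x; rewrite pV.
- exact/forallP.
- by apply/eqP/permP => x; rewrite permM perm1 p_inv.
- exact/forallP.
Qed.

Lemma polarity_card (p : {perm T}) :
  p \in polarities eK V1 -> #|T| = #|V1| + #|V1|.
Proof.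
case/polarityP => _ p_inv _ pV _.
have pV1 : p @: V1 = ~: V1.
  apply/setP => y; rewrite inE; apply/imsetP/idP => [[x xV ->]|yV].
    by rewrite pV xV.
  by exists (p y); rewrite ?p_inv // pV.
by rewrite -(cardsC V1) -pV1 card_imset //; apply: perm_inj.
Qed.

End Automorphisms.

Lemma simple_graphP (T : finType) (e : rel T) :
  reflect (irreflexive e /\ symmetric e) (simple_graph e).
Proof.
apply: (iffP andP) => [[/forallP e_irr /forallP e_sym]|[e_irr e_sym]].
  by split=> [x|x y]; [apply/negbTE/e_irr | apply/eqP/(forallP (e_sym x))].
by split; apply/forallP => x; [rewrite e_irr | apply/forallP => y; rewrite e_sym].
Qed.

Lemma bipartition_edge (T : finType) (e : rel T) (V1 : {set T}) x y :
  is_bipartition e V1 -> e x y -> (x \in V1) != (y \in V1).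
Proof. by move=> bip; apply/implyP/(forallP (forallP bip x)). Qed.

Definition kc_swap (X : Type) (u : X * bool) : X * bool := (u.1, ~~ u.2).

Lemma kc_swapK (X : Type) : involutive (@kc_swap X).
Proof. by case=> x b; rewrite /kc_swap negbK. Qed.

Lemma kron_cover_swap (X : finType) (e : rel X) u v :
  kron_cover e (kc_swap u) (kc_swap v) = kron_cover e u v.
Proof. by rewrite /kron_cover /=; case: u.2; case: v.2. Qed.

Lemma graph_iso_kron_coverP (X X' : finType) (e : rel X) (e' : rel X') :
  reflect (exists2 F : X * bool -> X' * bool, bijective F &
             (forall u v, kron_cover e' (F u) (F v) = kron_cover e u v) /\
             (forall u, F (kc_swap u) = kc_swap (F u)))
          (graph_iso e e').
Proof.
apply: (iffP (graph_isoP _ _)) => [[f [g fK gK] fE]|[F F_bij [FE F_swap]]].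
  exists (fun u => (f u.1, u.2)).
    by exists (fun u => (g u.1, u.2)) => -[x b] /=; rewrite ?fK ?gK.
  by split=> [u v|u]; rewrite /kron_cover /= ?fE.
pose f x := (F (x, false)).1.
have F_true x : F (x, true) = kc_swap (F (x, false)) by rewrite -F_swap.
have fE x y : e' (f x) (f y) = e x y.
  have := FE (x, false) (y, true); have := FE (x, false) (y, false).
  rewrite F_true /kron_cover /f /=.
  by case: (F (x, false)) => x' [] /=; case: (F (y, false)) => y' [] /=;
    rewrite ?andbT ?andbF // => -> <-.
have f_inj : injective f.
  move=> x y; rewrite /f; case Fx: (F (x, false)) => [x' b].
  case Fy: (F (y, false)) => [y' c] /= eq_xy; subst y'.
  have : F (y, false) = F (x, b != c).
    by rewrite Fy; case: b c Fx {Fy} => [] [] Fx; rewrite ?F_true Fx.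
  by move/(bij_inj F_bij) => [->].
exists f => //; apply: inj_card_bij f_inj _.
have := bij_eq_card F_bij; rewrite !card_prod card_bool => /eqP.
by rewrite eqn_mul2r => /eqP ->.
Qed.

Definition induced_polarity (X T : finType) (e : rel X) (eK : rel T) (p : {perm T})
  : bool :=
  [exists phi : {ffun X * bool -> T},
    [&& #|{: X * bool}| == #|T|, injectiveb phi,
        [forall u, forall v, eK (phi u) (phi v) == kron_cover e u v] &
        [forall u, p (phi u) == phi (kc_swap u)]]].

Lemma induced_polarityP (X T : finType) (e : rel X) (eK : rel T) (p : {perm T}) :
  reflect (exists2 phi : X * bool -> T, bijective phi &
             (forall u v, eK (phi u) (phi v) = kron_cover e u v) /\
             (forall u, p (phi u) = phi (kc_swap u)))
          (induced_polarity e eK p).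
Proof.
apply: (iffP existsP) => [[phi /and4P []]|].
  move=> /eqP cardT /injectiveP phi_inj /forallP phiE /forallP p_phi.
  exists phi; first exact: inj_card_bij phi_inj (eq_leq (esym cardT)).
  by split=> [u v|u]; apply/eqP; [apply: (forallP (phiE u)) | apply: p_phi].
move=> [phi phi_bij [phiE p_phi]]; exists (finfun phi); apply/and4P; split.
- by rewrite (bij_eq_card phi_bij).
- by apply/injectiveP => u v; rewrite !ffunE; apply: bij_inj.
- by apply/forallP => u; apply/forallP => v; rewrite !ffunE phiE.
- by apply/forallP => u; rewrite !ffunE p_phi.
Qed.

Lemma induced_polarity_graph_iso (X T : finType) (e : rel X) (eK : rel T) (p : {perm T}) :
  induced_polarity e eK p -> graph_iso (kron_cover e) eK.
Proof. by case/induced_polarityP => phi phi_bij [phiE _]; apply/graph_isoP; exists phi. Qed.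

Section CoverToPolarity.

Variables (X T : finType) (e : rel X) (eK : rel T) (V1 : {set T}).
Hypotheses (e_irr : irreflexive e) (connK : connected_graph eK)
           (bipK : is_bipartition eK V1).

Lemma induced_polarity_exists :
  graph_iso (kron_cover e) eK ->
  exists2 p, p \in polarities eK V1 & induced_polarity e eK p.
Proof.
case/graph_isoP => phi phi_bij phiE; have [g phiK gK] := phi_bij.
have p_inj : injective (fun x => phi (kc_swap (g x))).
  by move=> x y /(bij_inj phi_bij) /(inv_inj (@kc_swapK _)) /(can_inj gK).
pose p := perm p_inj.
have p_phi u : p (phi u) = phi (kc_swap u) by rewrite permE /= phiK.
exists p; last by apply/induced_polarityP; exists phi.
have sheet_bip x y : eK x y -> (g x).2 != (g y).2.
  by rewrite -{1}(gK x) -{1}(gK y) phiE => /andP [].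
(* Connectedness: membership in V1 and the sheet of [g x] determine each other. *)
have V1_sheet x y : (x \in V1) (+) (g x).2 = (y \in V1) (+) (g y).2.
  exact: connected_bipartition_xor connK (fun x y => bipartition_edge bipK) sheet_bip x y.
apply/polarityP; split.
- by apply/autKP => x y; rewrite -(gK x) -(gK y) !p_phi !phiE kron_cover_swap.
- by move=> x; rewrite -(gK x) !p_phi kc_swapK.
- move=> x; rewrite -(gK x) p_phi; apply/eqP => /(bij_inj phi_bij) /(congr1 snd) /=.
  by case: (g x).2.
- move=> x; have g_p : g (p x) = kc_swap (g x) by rewrite -{1}(gK x) p_phi phiK.
  have := V1_sheet x (p x); rewrite g_p /=.
  by case: (x \in V1); case: (_ \in V1); case: (g x).2.
- by move=> x; rewrite -(gK x) p_phi phiE /kron_cover /= e_irr.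
Qed.

End CoverToPolarity.

Section PolarityToCover.

Variables (T : finType) (eK : rel T) (V1 : {set T}) (p : {perm T}).
Hypotheses (eK_sym : symmetric eK) (bipK : is_bipartition eK V1)
           (p_pol : p \in polarities eK V1).
Variables (X : finType) (psi : X -> T) (e : rel X).
Hypotheses (psi_inj : injective psi) (psi_V1 : forall x, psi x \in V1)
           (cardX : #|X| = #|V1|).
(* [e] is the quotient K/p, its vertices represented in V1 through [psi]. *)
Hypothesis eE : forall x y, e x y = eK (psi x) (p (psi y)).

Let pK : p \in autK eK. Proof. by case/polarityP: p_pol. Qed.
Let p_inv : involutive p. Proof. by case/polarityP: p_pol. Qed.
Let pV x : (p x \in V1) = (x \notin V1). Proof. by case/polarityP: p_pol. Qed.
Let p_nadj x : ~~ eK x (p x). Proof. by case/polarityP: p_pol. Qed.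

Lemma polarity_quotient_simple : simple_graph e.
Proof.
apply/simple_graphP; split=> [x|x y]; rewrite !eE; first exact/negbTE/p_nadj.
by rewrite eK_sym -(autKP _ _ pK) p_inv.
Qed.

Lemma induced_polarity_quotient : induced_polarity e eK p.
Proof.
pose phi (u : X * bool) := if u.2 then p (psi u.1) else psi u.1.
have phi_inj : injective phi.
  move=> [x []] [y []]; rewrite /phi /= => eq_xy;
    by [rewrite (psi_inj (perm_inj eq_xy)) | have := psi_V1 x; rewrite eq_xy pV psi_V1
       | have := psi_V1 y; rewrite -eq_xy pV psi_V1 | rewrite (psi_inj eq_xy)].
have V1_indep x y : eK (psi x) (psi y) = false.
  by apply/negP => /(bipartition_edge bipK); rewrite !psi_V1.
apply/induced_polarityP; exists phi; last split.
- apply: inj_card_bij phi_inj _.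
  by rewrite card_prod card_bool cardX (polarity_card p_pol) muln2 addnn.
- move=> [x []] [y []]; rewrite /phi /kron_cover eE /= ?andbT ?andbF //.
  + by rewrite (autKP _ _ pK).
  + by rewrite -(autKP _ _ pK) p_inv.
- by move=> [x []]; rewrite /phi /= ?p_inv.
Qed.

End PolarityToCover.

(* Isomorphisms of the base graphs are the isomorphisms of their covers commuting with the
   sheet swaps (graph_iso_kron_coverP); transported to K, these are the automorphisms
   conjugating p to p'. *)
Lemma graph_iso_induced_polarity (X X' T : finType) (e : rel X) (e' : rel X')
    (eK : rel T) (p p' : {perm T}) :
  induced_polarity e eK p -> induced_polarity e' eK p' ->
  graph_iso e e' = (p' \in p ^: autK eK).
Proof.
case/induced_polarityP => phi phi_bij [phiE p_phi].
case/induced_polarityP => phi' phi'_bij [phi'E p'_phi'].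
have [g phiK gK] := phi_bij; have [g' phi'K g'K] := phi'_bij.
apply/graph_iso_kron_coverP/imsetP => [[F F_bij [FE F_swap]]|[a aK /eqP/conjg_permP a_p]].
  have a_inj : injective (fun x => phi' (F (g x))).
    by move=> x y /(bij_inj phi'_bij) /(bij_inj F_bij) /(can_inj gK).
  pose a := perm a_inj; have a_phi u : a (phi u) = phi' (F u) by rewrite permE /= phiK.
  exists a; first by apply/autKP => x y; rewrite -(gK x) -(gK y) !a_phi phi'E FE phiE.
  by apply/eqP/conjg_permP => x; rewrite -(gK x) p_phi !a_phi F_swap p'_phi'.
exists (fun u => g' (a (phi u))).
  by exists (fun v => g (a^-1 (phi' v))) => [u|v]; rewrite ?g'K ?permK ?phiK ?gK ?permKV.
split=> [u v|u]; first by rewrite -phi'E !g'K (autKP _ _ aK) phiE.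
by apply: (bij_inj phi'_bij); rewrite -p'_phi' !g'K -a_p p_phi.
Qed.

Section Counting.

Variables (T : finType) (eK : rel T) (V1 : {set T}).

Lemma n_kc_classes_m_eq0 m : m + m != #|T| -> n_kc_classes_m eK m = 0.
Proof.
move=> m_T; apply/eqP; rewrite cards_eq0 imset_eq0; apply/eqP/setP => E.
rewrite !inE; apply/negbTE; apply: contra m_T => /andP [_ /andP [/eqP <- _]].
by rewrite card_prod card_ord card_bool muln2 addnn.
Qed.

Lemma n_kc_classesE :
  n_kc_classes eK = if odd #|T| then 0 else n_kc_classes_m eK #|T|./2.
Proof.
have T_half := odd_double_half #|T|.
rewrite /n_kc_classes; case: ifP => T_odd.
  rewrite big1 // => m _; apply: n_kc_classes_m_eq0.
  by apply: contraTneq T_odd => <-; rewrite addnn odd_double.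
have half_lt : #|T|./2 < #|T|.+1 by lia.
rewrite (bigD1 (Ordinal half_lt)) //= big1 ?addn0 // => m /eqP m_half.
apply: n_kc_classes_m_eq0; apply/eqP => m_T; apply: m_half.
by apply: val_inj => /=; rewrite T_odd -addnn in T_half; lia.
Qed.

Hypotheses (simpK : simple_graph eK) (connK : connected_graph eK)
           (bipK : is_bipartition eK V1).

Lemma n_kc_classes_m_polarities m :
  #|T| = m + m -> n_kc_classes_m eK m = n_polarity_classes eK V1.
Proof.
move=> cardT; have [_ eK_sym] := simple_graphP _ simpK.
rewrite /n_kc_classes_m /n_polarity_classes.
(* Qualified: [grel] alone is fingraph's adjacency of a successor function. *)
apply: (card_imset_related set0 (R := fun E p => induced_polarity (Defs.grel E) eK p)).
- move=> E; rewrite inE => /andP [/simple_graphP [E_irr _] E_kc].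
  exact: induced_polarity_exists E_irr connK bipK E_kc.
- move=> p p_pol.
  have cardV1 : #|V1| = m by have := polarity_card p_pol; lia.
  pose psi (i : 'I_m) := enum_val (cast_ord (esym cardV1) i).
  have psi_inj : injective psi by move=> i j /enum_val_inj /cast_ord_inj.
  have psi_V1 i : psi i \in V1 by apply: enum_valP.
  pose E := [ffun ij : 'I_m * 'I_m => eK (psi ij.1) (p (psi ij.2))].
  have E_quot i j : Defs.grel E i j = eK (psi i) (p (psi j)) by rewrite /Defs.grel ffunE.
  have cardI : #|'I_m| = #|V1| by rewrite card_ord.
  have E_pol := induced_polarity_quotient bipK p_pol psi_inj psi_V1 cardI E_quot.
  exists E => //; rewrite inE (polarity_quotient_simple eK_sym p_pol E_quot) /=.
  exact: induced_polarity_graph_iso E_pol.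
- move=> E E' p p' _ _ _ _ E_pol E'_pol.
  rewrite !polarity_classE (sameP eqP class_eqP) class_sym.
  rewrite -(graph_iso_induced_polarity E_pol E'_pol).
  apply: (eq_set_rel (r := fun E E' => graph_iso (Defs.grel E) (Defs.grel E'))).
    by move=> E0; apply: graph_iso_refl.
  apply: sym_left_transitive => [E1 E2|E2 E1 E3]; last exact: graph_iso_trans.
  by apply/idP/idP; apply: graph_iso_sym.
Qed.

End Counting.

Theorem proposition3 (T : finType) (eK : rel T) (V1 : {set T}) :
  simple_graph eK ->
  connected_graph eK ->
  is_bipartition eK V1 ->
  n_kc_classes eK = n_polarity_classes eK V1 /\
  (forall k : nat, n_kc_classes eK = k <-> k = n_polarity_classes eK V1).
Proof.
move=> simpK connK bipK.
suff -> : n_kc_classes eK = n_polarity_classes eK V1 by split=> // k; split=> [<-|->].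
rewrite n_kc_classesE; case: ifP => T_odd.
  rewrite /n_polarity_classes; suff -> : polarities eK V1 = set0 by rewrite imset0 cards0.
  apply/setP => p; rewrite in_set0; apply/negbTE/negP => /polarity_card cardT.
  by rewrite cardT addnn odd_double in T_odd.
apply: n_kc_classes_m_polarities => //.
by have := odd_double_half #|T|; rewrite T_odd -addnn.
Qed.
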